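(* Fix nonnegative real parameters $k^A,k^B,t^A,t^B$ and let $cost(a,b,s)$ be as in the context. Then: (1) for fixed integers $a,b\ge 0$, the function $s\mapsto cost(a,b,s)$ on integers $s\ge 0$ is convex, i.e. its difference function $cost(a,b,s+1)-cost(a,b,s)$ is non-decreasing in $s$; (2) for fixed integers $s,a\ge 0$, the function $b\mapsto cost(a,b,s)$ is non-decreasing on integers $b\ge 0$; (3) for fixed integers $s,b\ge 0$, the function $a\mapsto cost(a,b,s)$ is non-decreasing on integers $a\ge 0$; (4) the function $x\mapsto cost(x,x+1,x+1)$ is non-decreasing on integers $x\ge 0$.
   Context: For integers $a,s\ge 0$ define $cost^A(a,s)=\min\{s\,t^A+k^A(x_1^2+\dots+x_s^2) : x_1+\dots+x_s=a,\ x_i\in\mathbb{Z}_{\ge 0}\}$, with $cost^A(0,0)=0$ and $cost^A(a,0)=+\infty$ for $a>0$; $cost^B(b,s)$ is defined analogously with $t^B,k^B$. Define $mcost^A(a,s)=\min\{cost^A(a,s') : s'\in\{s-1,s,s+1\},\ s'\ge 0\}$ and $cost(a,b,s)=cost^B(b,s)+mcost^A(a,s)$, with the usual conventions for $+\infty$. ''Increasing'' in the paper means non-decreasing. *)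

From mathcomp Require Import all_boot all_order all_algebra.
From mathcomp Require Import constructive_ereal.
Set Implicit Arguments. Unset Strict Implicit. Unset Printing Implicit Defensive.
Import Order.TTheory GRing.Theory Num.Theory.
Local Open Scope ring_scope.
Local Open Scope ereal_scope.

(* cost(a,s) = min { s*t + k*(x_1^2+...+x_s^2) : x_1+...+x_s = a, x_i in N },
   as an extended real; the minimum of the empty family is +oo.
   Each x_i <= a, so ranging over x : 'I_s -> 'I_(a+1) loses nothing.
   For s = 0 the only family is empty with sum 0: cost(0,0) = 0 and
   cost(a,0) = +oo for a > 0, matching the paper's conventions. *)
Definition cost1 {R : realDomainType} (t k : R) (a s : nat) : \bar R :=
  \big[Order.min/+oo]_(x : {ffun 'I_s -> 'I_a.+1} | (\sum_i (x i : nat))%N == a)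
     ((s%:R * t + k * (\sum_i ((x i : nat) ^ 2)%N)%:R)%R)%:E.

Definition mcost1 {R : realDomainType} (t k : R) (a s : nat) : \bar R :=
  match s with
  | 0%N => Order.min (cost1 t k a 0) (cost1 t k a 1)
  | s'.+1 => Order.min (Order.min (cost1 t k a s') (cost1 t k a s'.+1))
                       (cost1 t k a s'.+2)
  end.

Definition cost {R : realDomainType} (kA kB tA tB : R) (a b s : nat) : \bar R :=
  cost1 tB kB b s + mcost1 tA kA a s.

From mathcomp Require Import all_boot all_order all_algebra.
From mathcomp Require Import constructive_ereal.
From mathcomp Require Import zify lra.
Import Order.TTheory GRing.Theory Num.Theory.

(* For naturals x_1, ..., x_s with sum a, the secant bound
   x^2 >= (2q + 1) x - q (q + 1) gives
   x_1^2 + ... + x_s^2 >= (2q + 1) a - s q (q + 1) for every q, with equality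
   for the balanced family and q = a %/ s.  So, where it is finite,
   s |-> cost^A(a, s) is an upper envelope of affine functions of s whose
   intercepts k (2q + 1) a grow with a: it is convex in s and non-decreasing
   in a, and likewise for cost^B.  Minimising over the window {s - 1, s, s + 1}
   keeps the convexity, because the two midpoints of minimisers at s and s + 2
   both lie in the window of s + 1.  Finally cost^A(a, s) = s t + k a when
   a <= s, which makes x |-> cost(x, x + 1, x + 1) explicit. *)

Definition feasible (a s : nat) : bool := (0 < s)%N || (a == 0)%N.

(* The minimal value of [x_1^2 + ... + x_s^2] over naturals with sum [a],
   attained by the balanced family taking the value [a %/ s + 1] exactly
   [a %% s] times and [a %/ s] otherwise.  For [s = 0] it is junk unless
   [a = 0]. *)
Definition sqsum_min (a s : nat) : nat :=
  s * (a %/ s) ^ 2 + (2 * (a %/ s) + 1) * (a %% s).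

Lemma sqr_secant_le (y q : nat) : (2 * q + 1) * y <= y ^ 2 + q * (q + 1).
Proof. by case: (leqP y q) => le_yq; nia. Qed.

Lemma sum_sqr_secant_le s (x : 'I_s -> nat) q :
  (2 * q + 1) * (\sum_i x i) <= \sum_i x i ^ 2 + s * (q * (q + 1)).
Proof.
rewrite big_distrr -[in X in _ <= _ + X](card_ord s) -sum_nat_const.
rewrite -big_split /=.
by apply: leq_sum => i _; apply: sqr_secant_le.
Qed.

Lemma sqsum_min_secant a s :
  (2 * (a %/ s) + 1) * a = sqsum_min a s + s * (a %/ s * (a %/ s + 1)).
Proof.
rewrite /sqsum_min; have Ea := divn_eq a s.
set q := (a %/ s)%N in Ea *; set r := (a %% s)%N in Ea *.
by rewrite {1}Ea; nia.
Qed.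

Lemma sqsum_min_le s (x : 'I_s -> nat) :
  sqsum_min (\sum_i x i) s <= \sum_i x i ^ 2.
Proof.
have := sum_sqr_secant_le s x ((\sum_i x i) %/ s).
by rewrite sqsum_min_secant leq_add2r.
Qed.

Lemma sum_ord_ltn s r : \sum_(i < s) (i < r) = minn s r.
Proof.
elim: s => [|s IHs]; first by rewrite big_ord0 min0n.
by rewrite big_ord_recr /= IHs; case: ltnP => /=; lia.
Qed.

Lemma balanced_family {a s} : feasible a s ->
  exists x : {ffun 'I_s -> 'I_a.+1},
    \sum_i (x i : nat) = a /\ \sum_i (x i : nat) ^ 2 = sqsum_min a s.
Proof.
case: s => [/eqP->|s _]; first by exists [ffun=> ord0]; rewrite !big_ord0.
have Ea := divn_eq a s.+1; have lt_r := ltn_pmod a (ltn0Sn s).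
set q := (a %/ s.+1)%N in Ea *; set r := (a %% s.+1)%N in Ea lt_r *.
have x_le (i : 'I_s.+1) : q + (i < r) < a.+1 by case: ltnP => /=; nia.
pose x : {ffun 'I_s.+1 -> 'I_a.+1} := [ffun i : 'I_s.+1 => inord (q + (i < r))].
have xE i : x i = q + (i < r) :> nat by rewrite ffunE inordK ?x_le.
exists x; split.
  rewrite (eq_bigr _ (fun i _ => xE i)) big_split /= sum_nat_const card_ord.
  by rewrite sum_ord_ltn; lia.
rewrite (eq_bigr (fun i : 'I_s.+1 => q ^ 2 + (2 * q + 1) * (i < r)));
  last by move=> i _; rewrite xE; case: (i < r) => /=; nia.
rewrite big_split sum_nat_const card_ord -big_distrr sum_ord_ltn /=.
by rewrite /sqsum_min -/q -/r; congr (_ + _ * _); lia.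
Qed.

Lemma sqsum_min_ge a s q : feasible a s ->
  (2 * q + 1) * a <= sqsum_min a s + s * (q * (q + 1)).
Proof.
case/balanced_family=> x [sum_x sqsum_x].
by have := sum_sqr_secant_le s (fun i => x i : nat) q; rewrite sum_x sqsum_x.
Qed.

Lemma sqsum_min_small a s : a <= s -> sqsum_min a s = a.
Proof.
rewrite leq_eqVlt => /predU1P[->|lt_as]; last first.
  by rewrite /sqsum_min divn_small // modn_small //; lia.
by case: a => [|a] //; rewrite /sqsum_min divnn modnn /=; lia.
Qed.

Lemma feasibleW {a1 a2 s1 s2} : a1 <= a2 -> s1 <= s2 ->
  feasible a2 s1 -> feasible a1 s2.
Proof. by rewrite /feasible => le_a le_s /orP[|/eqP a2_0]; lia. Qed.

Local Open Scope ring_scope.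

Lemma affine_envelope_pair_le {R : realDomainType} {G alpha beta : nat -> R}
    {D : pred nat} {opt : nat -> nat} :
  (forall q s, D s -> alpha q + s%:R * beta q <= G s) ->
  (forall s, G s = alpha (opt s) + s%:R * beta (opt s)) ->
  forall i j m1 m2, D i -> D j -> (i <= m1)%N -> (i <= m2)%N ->
  (m1 + m2 = i + j)%N -> G m1 + G m2 <= G i + G j.
Proof.
move=> G_ge G_opt i j m1 m2 Di Dj.
(* Evaluate the piece of smaller slope at [i] and the other one at [j]: from
   [m] to [i] and from [m'] to [j] the argument moves by the same amount. *)
have key m m' : (i <= m)%N -> (m + m' = i + j)%N ->
    beta (opt m) <= beta (opt m') -> G m + G m' <= G i + G j.
  move=> le_im Em le_beta.
  have [d Ed] : exists d, m = (i + d)%N by exists (m - i)%N; lia.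
  have Em_R : m%:R = i%:R + d%:R :> R by rewrite Ed natrD.
  have Ej_R : j%:R = m'%:R + d%:R :> R by rewrite -natrD; congr _%:R; lia.
  have := G_ge (opt m) i Di; have := G_ge (opt m') j Dj.
  have := ler_wpM2l (ler0n R d) le_beta.
  rewrite (G_opt m) (G_opt m') Em_R Ej_R; lra.
move=> le_im1 le_im2 Em.
have [le_beta|/ltW le_beta] := leP (beta (opt m1)) (beta (opt m2)).
  exact: key.
by rewrite addrC; apply: key; rewrite // addnC.
Qed.

Section SquareCost.
Variables (R : realDomainType) (t k : R).
Hypothesis k_ge0 : 0 <= k.

Definition cost1R (a s : nat) : R := s%:R * t + k * (sqsum_min a s)%:R.

Definition secant_intercept (a q : nat) : R := k * ((2 * q + 1) * a)%N%:R.

Definition secant_slope (q : nat) : R := t - k * (q * (q + 1))%N%:R.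

Lemma cost1R_ge_affine a q s : feasible a s ->
  secant_intercept a q + s%:R * secant_slope q <= cost1R a s.
Proof.
move/(sqsum_min_ge _ _ q); rewrite -(ler_nat R) => /(ler_wpM2l k_ge0).
by rewrite /secant_intercept /secant_slope /cost1R natrD natrM; lra.
Qed.

Lemma cost1R_affine a s :
  cost1R a s = secant_intercept a (a %/ s) + s%:R * secant_slope (a %/ s).
Proof.
rewrite /secant_intercept /secant_slope /cost1R sqsum_min_secant.
by rewrite natrD natrM; lra.
Qed.

Lemma cost1R_pair_le a i j m1 m2 : feasible a i -> feasible a j ->
  (i <= m1)%N -> (i <= m2)%N -> (m1 + m2 = i + j)%N ->
  cost1R a m1 + cost1R a m2 <= cost1R a i + cost1R a j.
Proof.
exact: (affine_envelope_pair_le (D := feasible a) (cost1R_ge_affine a)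
                                (cost1R_affine a)).
Qed.

Lemma cost1R_le_in_a a1 a2 s : (a1 <= a2)%N -> feasible a2 s ->
  cost1R a1 s <= cost1R a2 s.
Proof.
move=> le_a /(cost1R_ge_affine _ (a1 %/ s)); apply: le_trans.
by rewrite cost1R_affine lerD2r ler_wpM2l // ler_nat leq_mul2l le_a orbT.
Qed.

Local Open Scope ereal_scope.

Lemma cost1E a s :
  cost1 t k a s = if feasible a s then (cost1R a s)%:E else +oo.
Proof.
case: ifP => fs.
  apply/eqP; rewrite eq_le; apply/andP; split.
    have [x [sum_x sqsum_x]] := balanced_family fs.
    by apply: (bigmin_inf x); rewrite ?sum_x // sqsum_x.
  apply: le_bigmin => [|x /eqP sum_x]; first exact: leey.
  rewrite lee_fin lerD2l ler_wpM2l // ler_nat.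
  by have := sqsum_min_le s (fun i => x i : nat); rewrite sum_x.
apply: bigmin_eq_id; case: s fs => [|s] // fs x.
by rewrite big_ord0 eq_sym -[a == 0%N]/(feasible a 0) fs.
Qed.

Lemma cost1_le_in_a a1 a2 s : (a1 <= a2)%N ->
  cost1 t k a1 s <= cost1 t k a2 s.
Proof.
move=> le_a; rewrite !cost1E; have [fs2|_] := boolP (feasible a2 s).
  by rewrite (feasibleW le_a (leqnn s) fs2) lee_fin cost1R_le_in_a.
by rewrite leey.
Qed.

Lemma cost1_midconvex a s :
  cost1 t k a s.+1 + cost1 t k a s.+1 <= cost1 t k a s + cost1 t k a s.+2.
Proof.
rewrite !cost1E /=; case: ifP => fs; last by rewrite addye ?leey.
by rewrite -!EFinD lee_fin; apply: cost1R_pair_le => //=; lia.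
Qed.

Lemma cost1_small a s : (a <= s)%N ->
  cost1 t k a s = (s%:R * t + k * a%:R)%:E.
Proof.
move=> le_as; rewrite cost1E /cost1R sqsum_min_small //.
have faa : feasible a a by case: a {le_as}.
by rewrite (feasibleW (leqnn a) le_as faa).
Qed.

Lemma mcost1_le a s i : (s <= i.+1)%N -> (i <= s.+1)%N ->
  mcost1 t k a s <= cost1 t k a i.
Proof.
case: s => [|s] le_si le_is /=.
  have [->|->] : i = 0%N \/ i = 1%N by lia.
  1,2: by rewrite ge_min lexx ?orbT.
have [->|[->|->]] : i = s \/ i = s.+1 \/ i = s.+2 by lia.
all: by rewrite !ge_min lexx ?orbT.
Qed.

Lemma mcost1_window a s : exists i,
  [/\ (s <= i.+1)%N, (i <= s.+1)%N & mcost1 t k a s = cost1 t k a i].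
Proof.
case: s => [|s] /=; first by case: leP => _; [exists 0%N | exists 1%N].
set c := cost1 t k a.
case: (leP (Order.min (c s) (c s.+1)) (c s.+2)) => _.
  by case: leP => _; [exists s | exists s.+1]; split => //; lia.
by exists s.+2; split => //; lia.
Qed.

Lemma mcost1E a s : exists i, [/\ (s <= i.+1)%N, (i <= s.+1)%N,
  feasible a i & mcost1 t k a s = (cost1R a i)%:E].
Proof.
have [i [le_si le_is Ei]] := mcost1_window a s.
have := mcost1_le a s s.+1 (leqW (leqnSn s)) (leqnn s.+1).
rewrite Ei !cost1E /=; case: ifP => fi; last by rewrite leye_eq.
by exists i.
Qed.

Lemma mcost1_midconvex a s :
  mcost1 t k a s.+1 + mcost1 t k a s.+1 <= mcost1 t k a s + mcost1 t k a s.+2.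
Proof.
have [i [le_si le_is fi ->]] := mcost1E a s.
have [j [le_sj le_js fj ->]] := mcost1E a s.+2.
pose m1 := ((i + j) %/ 2)%N; pose m2 := (i + j - m1)%N.
have le_im1 : (i <= m1)%N by rewrite /m1; lia.
have le_im2 : (i <= m2)%N by rewrite /m2 /m1; lia.
have mcost1_le_m m : (i <= m)%N -> (s.+1 <= m.+1)%N -> (m <= s.+2)%N ->
    mcost1 t k a s.+1 <= (cost1R a m)%:E.
  move=> le_im le_sm le_ms; have fm := feasibleW (leqnn a) le_im fi.
  by rewrite -[(cost1R a m)%:E](ifT _ +oo fm) -cost1E mcost1_le.
apply: le_trans (leeD (mcost1_le_m m1 _ _ _) (mcost1_le_m m2 _ _ _)) _ => //.
1-4: by rewrite /m2 /m1; lia.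
by rewrite -!EFinD lee_fin cost1R_pair_le // /m2; lia.
Qed.

Lemma mcost1_le_in_a a1 a2 s : (a1 <= a2)%N ->
  mcost1 t k a1 s <= mcost1 t k a2 s.
Proof. by move=> le_a; case: s => [|s] /=; rewrite !le_min2 ?cost1_le_in_a. Qed.

End SquareCost.

Local Open Scope ereal_scope.

Lemma midconvex_sube {R : realDomainType} (x0 x1 x2 : \bar R) :
  x1 \is a fin_num -> x2 \is a fin_num -> x1 + x1 <= x0 + x2 ->
  x1 - x0 <= x2 - x1.
Proof.
case: x1 x2 => [x1||] [x2||] // _ _; case: x0 => [x0||] /=.
- by rewrite -!EFinD !lee_fin; lra.
- by rewrite addeNy leNye.
- by rewrite addNye leeNy_eq.
Qed.

Section Cost.
Variables (R : realDomainType) (kA kB tA tB : R).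
Hypotheses (kA_ge0 : (0 <= kA)%R) (kB_ge0 : (0 <= kB)%R).
Local Notation cost := (cost kA kB tA tB).

Lemma cost_midconvex a b s :
  cost a b s.+1 + cost a b s.+1 <= cost a b s + cost a b s.+2.
Proof.
rewrite /cost addeACA [leRHS]addeACA.
by apply: leeD; [apply: cost1_midconvex | apply: mcost1_midconvex].
Qed.

Lemma cost_fin_num a b s : cost a b s.+1 \is a fin_num.
Proof.
rewrite /cost; have [i [_ _ _ ->]] := mcost1E _ tA _ kA_ge0 a s.+1.
by rewrite fin_numD cost1E.
Qed.

Lemma cost_subS_le a b s :
  cost a b s.+1 - cost a b s <= cost a b s.+2 - cost a b s.+1.
Proof. by apply: midconvex_sube; rewrite ?cost_fin_num ?cost_midconvex. Qed.

Lemma cost_le_in_b a b1 b2 s : (b1 <= b2)%N -> cost a b1 s <= cost a b2 s.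
Proof. by move=> le_b; rewrite leeD2r ?cost1_le_in_a. Qed.

Lemma cost_le_in_a a1 a2 b s : (a1 <= a2)%N -> cost a1 b s <= cost a2 b s.
Proof. by move=> le_a; rewrite leeD2l ?mcost1_le_in_a. Qed.

Hypothesis tA_ge0 : (0 <= tA)%R.

Lemma cost_diagE x :
  cost x x.+1 x.+1 = (x.+1%:R * tB + kB * x.+1%:R + (x%:R * tA + kA * x%:R))%:E.
Proof.
rewrite /cost /= !cost1_small // ?leqW //.
have le_s (s1 s2 : nat) : (s1 <= s2)%N ->
    (s1%:R * tA + kA * x%:R)%:E <= (s2%:R * tA + kA * x%:R)%:E.
  by move=> le_s12; rewrite lee_fin lerD2r ler_wpM2r // ler_nat.
by rewrite (min_l (le_s _ _ (leqnSn x))) min_l ?le_s ?leqW.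
Qed.

Hypothesis tB_ge0 : (0 <= tB)%R.

Lemma cost_diag_le x y : (x <= y)%N -> cost x x.+1 x.+1 <= cost y y.+1 y.+1.
Proof.
move=> le_xy; rewrite !cost_diagE lee_fin.
have le_n (m n : nat) : (m <= n)%N -> (m%:R <= n%:R :> R)%R by rewrite ler_nat.
by rewrite !lerD ?ler_wpM2l ?ler_wpM2r ?le_n.
Qed.

End Cost.

Theorem lemma3 (R : realDomainType) (kA kB tA tB : R)
  (hkA : (0 <= kA)%R) (hkB : (0 <= kB)%R) (htA : (0 <= tA)%R) (htB : (0 <= tB)%R) :
  (* (1) convexity in s: the difference function is non-decreasing *)
  (forall a b s : nat,
     cost kA kB tA tB a b s.+1 - cost kA kB tA tB a b s
       <= cost kA kB tA tB a b s.+2 - cost kA kB tA tB a b s.+1) /\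
  (* (2) non-decreasing in b *)
  (forall s a b1 b2 : nat, (b1 <= b2)%N ->
     cost kA kB tA tB a b1 s <= cost kA kB tA tB a b2 s) /\
  (* (3) non-decreasing in a *)
  (forall s b a1 a2 : nat, (a1 <= a2)%N ->
     cost kA kB tA tB a1 b s <= cost kA kB tA tB a2 b s) /\
  (* (4) x |-> cost(x, x+1, x+1) non-decreasing *)
  (forall x y : nat, (x <= y)%N ->
     cost kA kB tA tB x x.+1 x.+1 <= cost kA kB tA tB y y.+1 y.+1).
Proof.
split; first exact: cost_subS_le.
split; first by move=> s a b1 b2; apply: cost_le_in_b.
split; first by move=> s b a1 a2; apply: cost_le_in_a.
exact: cost_diag_le.
Qed.
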